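(* Let $\mathcal{W}\in\mathbb{R}^{w_1\times\cdots\times w_N}$ with $N\ge 2$. For $n=1,\dots,N$ let $e_n(m)\in\mathbb{Z}_{>0}^N$ denote the shape with $m$ in position $n$ and $1$ in all other positions, and let $\mathbf{1}=(1,\dots,1)$. (i) (CP) If $\mathcal{W}_{i_1\cdots i_N}=\sum_{r=1}^{R}U^{(1)}_{r i_1}\cdots U^{(N)}_{r i_N}$ for some matrices $U^{(n)}\in\mathbb{R}^{R\times w_n}$, then $\mathcal{W}$ admits a SeKron representation with $S=N$, ranks $R_1=R$, $R_2=\cdots=R_{N-1}=1$, and factor shapes $e_n(w_n)$ for the $n$-th factor. (ii) (Tucker) If $\mathcal{W}_{i_1\cdots i_N}=\sum_{r_1,\dots,r_N}\mathcal{G}_{r_1\cdots r_N}U^{(1)}_{i_1r_1}\cdots U^{(N)}_{i_Nr_N}$ for some core $\mathcal{G}\in\mathbb{R}^{R_1^{T}\times\cdots\times R_N^{T}}$ and matrices $U^{(n)}\in\mathbb{R}^{w_n\times R^{T}_n}$, then $\mathcal{W}$ admits a SeKron representation with $S=N+1$, ranks $R_n=R^{T}_n$ ($n=1,\dots,N$), factor shapes $e_n(w_n)$ for the $n$-th factor ($n\le N$) and $\mathbf{1}$ for the $(N+1)$-th factor. (iii) (Tensor Ring, and hence Tensor Train as the case $R^{TR}_1=1$) If $\mathcal{W}_{i_1\cdots i_N}=\sum_{r_1,\dots,r_N}\mathcal{G}^{(1)}_{i_1r_1r_2}\mathcal{G}^{(2)}_{i_2r_2r_3}\cdots\mathcal{G}^{(N)}_{i_Nr_Nr_{N+1}}$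 with $r_{N+1}:=r_1$, for some cores $\mathcal{G}^{(n)}\in\mathbb{R}^{w_n\times R^{TR}_n\times R^{TR}_{n+1}}$ with $R^{TR}_{N+1}=R^{TR}_1$, then $\mathcal{W}$ admits a SeKron representation with $S=N+1$, ranks $R_n=R^{TR}_n$ ($n=1,\dots,N$), factor shape $\mathbf{1}$ for the first factor and $e_n(w_n)$ for the $(n+1)$-th factor ($n=1,\dots,N$).
   Context: Indices are 0-based. Kronecker product of tensors $\mathcal{A}\in\mathbb{R}^{a_1\times\cdots\times a_N}$, $\mathcal{B}\in\mathbb{R}^{b_1\times\cdots\times b_N}$: $(\mathcal{A}\otimes\mathcal{B})_{i_1\cdots i_N}=\mathcal{A}_{j_1\cdots j_N}\mathcal{B}_{k_1\cdots k_N}$, $j_n=\lfloor i_n/b_n\rfloor$, $k_n=i_n\bmod b_n$; it is associative and bilinear. A SeKron representation of $\mathcal{W}$ with sequence length $S$, ranks $R_1,\dots,R_{S-1}$ and factor shapes $(a^{(k)}_1,\dots,a^{(k)}_N)$, $k=1,\dots,S$ (with $\prod_k a^{(k)}_n=w_n$), is an identity $\mathcal{W}=\sum_{r_1=1}^{R_1}\cdots\sum_{r_{S-1}=1}^{R_{S-1}}\mathcal{A}^{(1)}_{r_1}\otimes\mathcal{A}^{(2)}_{r_1r_2}\otimes\cdots\otimes\mathcal{A}^{(S-1)}_{r_1\cdots r_{S-1}}\otimes\mathcal{A}^{(S)}_{r_1\cdots r_{S-1}}$ with $\mathcal{A}^{(k)}_{\cdots}\in\mathbb{R}^{a^{(k)}_1\times\cdots\times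 a^{(k)}_N}$. *)

From HB Require Import structures.
From mathcomp Require Import all_boot all_order all_algebra.
From mathcomp Require Import reals.
Set Implicit Arguments. Unset Strict Implicit. Unset Printing Implicit Defensive.
Import Order.TTheory GRing.Theory Num.Theory.
Local Open Scope ring_scope.

(* An order-N tensor is a function on multi-indices i : 'I_N -> nat (0-based).
   A tensor "of shape w" is only ever evaluated at valid indices,
   i.e. those with  i n < w n  for all n. *)
Definition tensor (R : Type) (N : nat) := ('I_N -> nat) -> R.

Definition valid_index (N : nat) (w : 'I_N -> nat) (i : 'I_N -> nat) : Prop :=
  forall n : 'I_N, (i n < w n)%N.

Definition kron (R : nzRingType) (N : nat) (b : 'I_N -> nat)
  (A B : tensor R N) : tensor R N :=
  fun i => A (fun n => (i n %/ b n)%N) * B (fun n => (i n %% b n)%N).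

Definition shape_prod (N : nat) (shs : seq ('I_N -> nat)) : 'I_N -> nat :=
  fun n => (\prod_(a <- shs) a n)%N.

Fixpoint kron_list (R : nzRingType) (N : nat) (l : seq (('I_N -> nat) * tensor R N))
  : tensor R N :=
  match l with
  | [::] => fun _ => 1
  | (a, A) :: rest => kron (shape_prod (map fst rest)) A (kron_list rest)
  end.

Fixpoint sum_ranks (R : nzRingType) (ranks : seq nat) (f : seq nat -> R) : R :=
  match ranks with
  | [::] => f [::]
  | Rk :: rest => \sum_(r < Rk) sum_ranks rest (fun s => f ((r : nat) :: s))
  end.

(* SeKron representation of W (shape w) with sequence length S, ranks
   [:: R_1; ...; R_{S-1}] and factor shapes (shapes k), k = 0..S-1 (0-based):
   there are factors A k rs (k-th factor depending on the first
   min(k+1, S-1) rank indices) such that for every valid index i,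
   W_i = sum_{r_1..r_{S-1}} (A^(1)_{r_1} ⊗ A^(2)_{r_1 r_2} ⊗ ... ⊗ A^(S)_{r_1..r_{S-1}})_i. *)
Definition is_SeKron (R : nzRingType) (N : nat) (w : 'I_N -> nat) (W : tensor R N)
  (S : nat) (ranks : seq nat) (shapes : nat -> 'I_N -> nat) : Prop :=
  [/\ (0 < S)%N, size ranks = S.-1,
      (forall n : 'I_N, (\prod_(k < S) shapes k n)%N = w n) &
      exists A : nat -> seq nat -> tensor R N,
        forall i, valid_index w i ->
          W i = sum_ranks ranks (fun rs =>
                  kron_list [seq (shapes k, A k (take k.+1 rs)) | k <- iota 0 S] i)].

Definition e_shape (N : nat) (w : 'I_N -> nat) (k : nat) : 'I_N -> nat :=
  fun n => if (n : nat) == k then w n else 1%N.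

From HB Require Import structures.
From mathcomp Require Import all_boot all_order all_algebra.
From mathcomp Require Import reals.
From Stdlib Require Import FunctionalExtensionality.
Set Implicit Arguments. Unset Strict Implicit. Unset Printing Implicit Defensive.
Import Order.TTheory GRing.Theory Num.Theory.
Local Open Scope ring_scope.

(* When the factor shapes are one-hot, i.e. the k-th factor is nontrivial only
   in mode k, the mixed-radix digits of an index i are i itself in mode k and 0
   elsewhere, so the Kronecker product of the factors is just their outer
   product.  CP, Tucker and tensor-ring decompositions are sums of such outer
   products, with the rank indices shared as follows: in CP all factors see
   r_1; in Tucker an extra last factor of shape 1 carries the core, which sees
   every r_n; in a tensor ring an extra leading factor of shape 1 makes every
   later factor see r_1, which closes the ring r_{N+1} = r_1. *)

Section KroneckerDigits.
Variables (R : nzRingType) (N : nat).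

Lemma kron_list_map_iota (f : nat -> ('I_N -> nat) * tensor R N) m S i :
  (forall n, i n < \prod_(m <= k < m + S) (f k).1 n)%N ->
  kron_list (map f (iota m S)) i =
  \prod_(m <= k < m + S) (f k).2 (fun n =>
     (i n %/ \prod_(k.+1 <= j < m + S) (f j).1 n) %% (f k).1 n)%N.
Proof.
elim: S m i => [|S IH] m i lt_i; first by rewrite /= big_geq // addn0.
set b := fun n => (\prod_(m.+1 <= k < m.+1 + S) (f k).1 n)%N.
have lt_i_hd n : (i n < (f m).1 n * b n)%N.
  by have := lt_i n; rewrite addnS big_ltn ?ltnS ?leq_addr // -addSn.
have b_gt0 n : (0 < b n)%N.
  by have := lt_i_hd n; case: (b n); rewrite ?muln0.
have shape_tail : shape_prod [seq x.1 | x <- [seq f k | k <- iota m.+1 S]] = b.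
  apply: functional_extensionality => n.
  by rewrite /b /shape_prod -map_comp big_map /index_iota addKn.
rewrite addnS big_ltn ?ltnS ?leq_addr // -addSn.
case E: (f m) lt_i_hd => [a A] /= lt_i_hd; rewrite E.
rewrite shape_tail /kron IH => [|n]; last by rewrite ltn_pmod.
congr (_ * _).
  congr A; apply: functional_extensionality => n.
  by rewrite modn_small // ltn_divLR; [exact: lt_i_hd | exact: b_gt0].
apply: eq_big_nat => k /andP [ltmk ltkS]; congr (f k).2.
apply: functional_extensionality => n.
set T := (\prod_(k.+1 <= j < m.+1 + S) (f j).1 n)%N.
have [C dvdC ->] : exists2 C, ((f k).1 n %| C)%N & b n = (C * T)%N.
  exists (\prod_(m.+1 <= j < k.+1) (f j).1 n)%N.
    by rewrite big_nat_recr ?dvdn_mull.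
  by rewrite /b (@big_cat_nat _ _ _ k.+1) // ltnW.
by rewrite -modn_divl modn_dvdm.
Qed.

Lemma kron_list_cons_small (a : 'I_N -> nat) (A : tensor R N) l i :
  (forall n, i n < shape_prod (map fst l) n)%N ->
  kron_list ((a, A) :: l) i = A (fun _ => 0%N) * kron_list l i.
Proof.
move=> lt_i; rewrite /= /kron.
have -> : (fun n => i n %/ shape_prod (map fst l) n)%N = (fun _ => 0%N).
  by apply: functional_extensionality => n; rewrite divn_small.
congr (_ * kron_list l _); apply: functional_extensionality => n.
by rewrite modn_small.
Qed.

Definition proj_index (i : 'I_N -> nat) (k : nat) : 'I_N -> nat :=
  fun n => if (n : nat) == k then i n else 0%N.

Variable w : 'I_N -> nat.

Lemma prod_e_shape S (n : 'I_N) : (n < S)%N ->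
  (\prod_(k < S) e_shape w k n)%N = w n.
Proof.
move=> lt_nS; rewrite (bigD1 (Ordinal lt_nS)) //= big1 ?muln1.
  by rewrite /e_shape eqxx.
move=> k; rewrite -val_eqE /e_shape /= eq_sym.
by case: eqP.
Qed.

Lemma prod_e_shape_nat_gt a b (n : 'I_N) : (n < a)%N ->
  (\prod_(a <= k < b) e_shape w k n)%N = 1%N.
Proof.
move=> lt_na; rewrite big_nat big1 // => k /andP [le_ak _].
by rewrite /e_shape ltn_eqF // (leq_trans lt_na le_ak).
Qed.

Lemma kron_list_e_shape (A : nat -> tensor R N) S i :
  (N <= S)%N -> valid_index w i ->
  kron_list [seq (e_shape w k, A k) | k <- iota 0 S] i =
  \prod_(k < S) A k (proj_index i k).
Proof.
move=> le_NS lt_i; rewrite kron_list_map_iota => [|n]; last first.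
  by rewrite add0n big_mkord prod_e_shape ?lt_i // (leq_trans (ltn_ord n)).
rewrite add0n big_mkord; apply: eq_bigr => k _ /=.
congr A; apply: functional_extensionality => n; rewrite /proj_index /e_shape.
case: eqP => [eq_nk | _]; last exact: modn1.
by rewrite prod_e_shape_nat_gt ?divn1 ?modn_small ?eq_nk.
Qed.

End KroneckerDigits.

Lemma eq_sum_ranks (R : nzRingType) ranks (f g : seq nat -> R) :
  f =1 g -> sum_ranks ranks f = sum_ranks ranks g.
Proof.
elim: ranks f g => [|Rk ranks IH] f g eq_fg /=; first exact: eq_fg.
by apply: eq_bigr => r _; apply: IH.
Qed.

Lemma sum_ranks_nseq1 (R : nzRingType) k (f : seq nat -> R) :
  sum_ranks (nseq k 1%N) f = f (nseq k 0%N).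
Proof. by elim: k f => [|k IH] f //=; rewrite big_ord1 IH. Qed.

Section OneHotSeKron.
Variables (R : nzRingType) (N : nat) (w : 'I_N -> nat) (W : tensor R N).

Lemma is_SeKron_e_shape S ranks (A : nat -> seq nat -> tensor R N) :
  (N <= S.+1)%N -> size ranks = S ->
  (forall i, valid_index w i -> W i = sum_ranks ranks (fun rs =>
     \prod_(k < S.+1) A k (take k.+1 rs) (proj_index i k))) ->
  is_SeKron w W S.+1 ranks (e_shape w).
Proof.
move=> le_NS size_ranks W_sum; split=> // [n|].
  by rewrite prod_e_shape // (leq_trans (ltn_ord n)).
exists A => i lt_i; rewrite W_sum //; apply: eq_sum_ranks => rs.
by rewrite kron_list_e_shape.
Qed.

Lemma is_SeKron_unit_e_shape S ranks (A : nat -> seq nat -> tensor R N) :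
  (N <= S)%N -> size ranks = S ->
  (forall i, valid_index w i -> W i = sum_ranks ranks (fun rs =>
     \prod_(k < S) A k (take k.+2 rs) (proj_index i k))) ->
  is_SeKron w W S.+1 ranks
    (fun k => if k is k'.+1 then e_shape w k' else (fun _ => 1%N)).
Proof.
move=> le_NS size_ranks W_sum; split=> // [n|].
  by rewrite big_ord_recl mul1n prod_e_shape // (leq_trans (ltn_ord n)).
exists (fun k rs => if k is k'.+1 then A k' rs else (fun _ => 1)).
move=> i lt_i; rewrite W_sum //; apply: eq_sum_ranks => rs.
rewrite [iota 0 _]/= (iotaDl 1 0) map_cons -map_comp.
rewrite kron_list_cons_small ?mul1r => [|n].
  by rewrite kron_list_e_shape.
have shape_prod_e_shape (B : nat -> tensor R N) :
    (shape_prod [seq x.1 | x <- [seq (e_shape w k, B k) | k <- iota 0 S]] n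
     = w n)%N.
  have -> : iota 0 S = index_iota 0 S by rewrite /index_iota subn0.
  rewrite /shape_prod -map_comp big_map big_mkord.
  by rewrite prod_e_shape // (leq_trans (ltn_ord n)).
by rewrite shape_prod_e_shape.
Qed.

End OneHotSeKron.

Lemma CP_is_SeKron (R : nzRingType) N (w : 'I_N.+2 -> nat) (W : tensor R N.+2)
    Rcp (U : 'I_N.+2 -> nat -> nat -> R) :
  (forall i, valid_index w i ->
     W i = \sum_(r < Rcp) \prod_(n < N.+2) U n r (i n)) ->
  is_SeKron w W N.+2 (Rcp :: nseq N 1%N) (e_shape w).
Proof.
move=> W_CP.
apply: (is_SeKron_e_shape
  (A := fun k rs j => U (inord k) (head 0%N rs) (j (inord k)))) => // [|i lt_i].
  by rewrite /= size_nseq.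
rewrite W_CP //=; apply: eq_bigr => r _; rewrite sum_ranks_nseq1.
by apply: eq_bigr => n _; rewrite inord_val /proj_index eqxx.
Qed.

Lemma Tucker_is_SeKron (R : comNzRingType) N (w : 'I_N.+1 -> nat)
    (W : tensor R N.+1) (RT : 'I_N.+1 -> nat) (G : tensor R N.+1)
    (U : 'I_N.+1 -> nat -> nat -> R) :
  (forall i, valid_index w i ->
     W i = sum_ranks [seq RT n | n <- enum 'I_N.+1] (fun rs =>
       G (fun n => nth 0%N rs n) * \prod_(n < N.+1) U n (i n) (nth 0%N rs n))) ->
  is_SeKron w W N.+2 [seq RT n | n <- enum 'I_N.+1] (e_shape w).
Proof.
move=> W_Tucker.
apply: (is_SeKron_e_shape (A := fun k rs =>
  if (k < N.+1)%N then fun j => U (inord k) (j (inord k)) (nth 0%N rs k)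
  else fun _ => G (fun n => nth 0%N rs n))) => // [|i lt_i].
  by rewrite size_map size_enum_ord.
rewrite W_Tucker //; apply: eq_sum_ranks => rs.
rewrite [RHS]big_ord_recr /= ltnn mulrC; congr (_ * _).
  apply: eq_bigr => n _; rewrite ltn_ord inord_val /proj_index eqxx.
  by rewrite nth_take.
congr G; apply: functional_extensionality => n.
by rewrite nth_take // leqW.
Qed.

Lemma tensor_ring_is_SeKron (R : nzRingType) N (w : 'I_N.+1 -> nat)
    (W : tensor R N.+1) (RTR : 'I_N.+1 -> nat)
    (G : 'I_N.+1 -> nat -> nat -> nat -> R) :
  (forall i, valid_index w i ->
     W i = sum_ranks [seq RTR n | n <- enum 'I_N.+1] (fun rs =>
       \prod_(n < N.+1) G n (i n) (nth 0%N rs n) (nth 0%N rs ((n + 1) %% N.+1)))) ->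
  is_SeKron w W N.+2 [seq RTR n | n <- enum 'I_N.+1]
    (fun k => if k is k'.+1 then e_shape w k' else (fun _ => 1%N)).
Proof.
move=> W_TR.
apply: (is_SeKron_unit_e_shape (A := fun k rs j =>
  G (inord k) (j (inord k)) (nth 0%N rs k) (nth 0%N rs ((k + 1) %% N.+1))))
  => // [|i lt_i].
  by rewrite size_map size_enum_ord.
rewrite W_TR //; apply: eq_sum_ranks => rs.
apply: eq_bigr => n _; rewrite inord_val /proj_index eqxx !nth_take //.
by rewrite ltnS (leq_trans (leq_mod _ _)) // addn1.
Qed.

Theorem theorem2 (R : realType) (N : nat) (w : 'I_N -> nat) (W : tensor R N) :
  (1 < N)%N ->
  (* (i) CP *)
  (forall (Rcp : nat) (U : 'I_N -> nat -> nat -> R),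
     (forall i, valid_index w i ->
        W i = \sum_(r < Rcp) \prod_(n < N) U n r (i n)) ->
     is_SeKron w W N (Rcp :: nseq (N - 2) 1%N) (e_shape w))
  /\
  (* (ii) Tucker *)
  (forall (RT : 'I_N -> nat) (G : tensor R N) (U : 'I_N -> nat -> nat -> R),
     (forall i, valid_index w i ->
        W i = sum_ranks [seq RT n | n <- enum 'I_N] (fun rs =>
                G (fun n => nth 0%N rs n) *
                \prod_(n < N) U n (i n) (nth 0%N rs n))) ->
     is_SeKron w W N.+1 [seq RT n | n <- enum 'I_N] (e_shape w))
  /\
  (* (iii) Tensor ring (r_{N+1} := r_1) *)
  (forall (RTR : 'I_N -> nat) (G : 'I_N -> nat -> nat -> nat -> R),
     (forall i, valid_index w i ->
        W i = sum_ranks [seq RTR n | n <- enum 'I_N] (fun rs =>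
                \prod_(n < N) G n (i n) (nth 0%N rs n) (nth 0%N rs ((n + 1) %% N)))) ->
     is_SeKron w W N.+1 [seq RTR n | n <- enum 'I_N]
       (fun k => if k is k'.+1 then e_shape w k' else (fun _ => 1%N))).
Proof.
case: N w W => [|[|N]] w W // _.
split; [|split].
- by move=> Rcp U; rewrite !subSS subn0; apply: CP_is_SeKron.
- by move=> RT G U; apply: Tucker_is_SeKron.
- by move=> RTR G; apply: tensor_ring_is_SeKron.
Qed.
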